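(* Consider the discrete-time nonlinear system $x^+=AM(x)+Bu$ with (unknown) $A\in\mathbb{R}^{n\times N}$, $B\in\mathbb{R}^{n\times m}$, $M(x)=\begin{bmatrix}x\\ \mathcal{Z}(x)\end{bmatrix}\in\mathbb{R}^N$, $\mathcal{Z}:\mathbb{R}^n\to\mathbb{R}^{N-n}$. Let $\mathcal{U}_0=[u(0),\dots,u(T-1)]$, $\mathcal{X}_1=[x(1),\dots,x(T)]$ and $\mathcal{M}_0=[M(x(0)),\dots,M(x(T-1))]$ be built from a single trajectory $x(t+1)=AM(x(t))+Bu(t)$, with $\mathcal{M}_0$ of full row rank, and let $Q=[Q_1~Q_2]\in\mathbb{R}^{T\times N}$ ($Q_1\in\mathbb{R}^{T\times n}$, $Q_2\in\mathbb{R}^{T\times(N-n)}$) satisfy $\mathcal{M}_0Q=\mathbb{I}_N$. Under the controller $u=\mathcal{U}_0QM(x)$, if the nonlinearity cancellation condition $\mathcal{X}_1Q_2=\mathbf{0}_{n\times(N-n)}$ holds, then for every $k\in\mathbb{N}_{>0}$ the state after $k$ steps of the closed-loop system is $x^{k+}=(\mathcal{X}_1Q_1)^kx$.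
   Context: $\mathbb{I}_N$ is the identity, $\mathbf{0}_{n\times(N-n)}$ the zero matrix; $x^{k+}$ denotes the state reached from $x$ after $k$ iterations of the closed-loop dynamics. *)

From mathcomp Require Import all_boot all_order all_algebra.
Set Implicit Arguments. Unset Strict Implicit. Unset Printing Implicit Defensive.
Import GRing.Theory Num.Theory.
Local Open Scope ring_scope.

Definition liftM (R : pzRingType) (n p : nat) (Z : 'cV[R]_n -> 'cV[R]_p)
  (x : 'cV[R]_n) : 'cV[R]_(n + p) := col_mx x (Z x).

Definition closed_loop (R : pzRingType) (n p m T : nat)
  (A : 'M[R]_(n, n + p)) (B : 'M[R]_(n, m)) (Z : 'cV[R]_n -> 'cV[R]_p)
  (U0 : 'M[R]_(m, T)) (Q : 'M[R]_(T, n + p)) (x : 'cV[R]_n) : 'cV[R]_n :=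
  A *m liftM Z x + B *m (U0 *m Q *m liftM Z x).

(* The data satisfy X1 = A M0 + B U0, so a right inverse Q of M0 gives
   X1 Q = A + B U0 Q: the closed loop is x+ = X1 Q M(x). Splitting Q = [Q1 Q2]
   according to M(x) = [x; Z(x)], this reads x+ = X1 Q1 x + X1 Q2 Z(x), and the
   cancellation condition X1 Q2 = 0 leaves the linear system x+ = X1 Q1 x. *)

From mathcomp Require Import all_boot all_order all_algebra.
Set Implicit Arguments. Unset Strict Implicit. Unset Printing Implicit Defensive.
Import GRing.Theory Num.Theory.
Local Open Scope ring_scope.

Lemma col_matrixP (R : Type) (m n : nat) (X Y : 'M[R]_(m, n)) :
  (forall j, col j X = col j Y) -> X = Y.
Proof.
move=> eqXY; apply/matrixP => i j.
by have /colP/(_ i) := eqXY j; rewrite !mxE.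
Qed.

Lemma mx_affine_cols (R : pzRingType) (n N m T : nat)
    (A : 'M[R]_(n, N)) (B : 'M[R]_(n, m))
    (X1 : 'M[R]_(n, T)) (M0 : 'M[R]_(N, T)) (U0 : 'M[R]_(m, T)) :
  (forall t, col t X1 = A *m col t M0 + B *m col t U0) ->
  X1 = A *m M0 + B *m U0.
Proof.
by move=> X1col; apply: col_matrixP => t; rewrite X1col !colE mulmxDl !mulmxA.
Qed.

Lemma iter_mulmx (R : pzRingType) (n : nat) (f : 'cV[R]_n -> 'cV[R]_n)
    (K : 'M[R]_n) :
  (forall x, f x = K *m x) -> forall k x, iter k f x = K ^+ k *m x.
Proof.
move=> fK; elim=> [|k IHk] x; first by rewrite expr0 mul1mx.
by rewrite iterS IHk fK exprS mulmxA.
Qed.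

Section DataDrivenClosedLoop.

Variables (R : pzRingType) (n p m T : nat).
Variables (A : 'M[R]_(n, n + p)) (B : 'M[R]_(n, m)) (Z : 'cV[R]_n -> 'cV[R]_p).
Variables (U0 : 'M[R]_(m, T)) (X1 : 'M[R]_(n, T)) (M0 : 'M[R]_(n + p, T)).
Variable Q : 'M[R]_(T, n + p).

Hypothesis X1_data : X1 = A *m M0 + B *m U0.
Hypothesis M0Q : M0 *m Q = 1%:M.

Lemma closed_loop_data x : closed_loop A B Z U0 Q x = X1 *m Q *m liftM Z x.
Proof.
by rewrite /closed_loop X1_data mulmxDl -(mulmxA A) M0Q mulmx1 !mulmxA mulmxDl.
Qed.

Hypothesis nonlinearity_cancel : X1 *m rsubmx Q = 0.

Lemma closed_loop_linear x : closed_loop A B Z U0 Q x = X1 *m lsubmx Q *m x.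
Proof.
have X1Q : X1 *m Q = row_mx (X1 *m lsubmx Q) (X1 *m rsubmx Q).
  by rewrite -mul_mx_row hsubmxK.
by rewrite closed_loop_data X1Q mul_row_col nonlinearity_cancel mul0mx addr0.
Qed.

End DataDrivenClosedLoop.

Theorem lemma3 (R : realFieldType) (n p m T : nat)
  (A : 'M[R]_(n, n + p)) (B : 'M[R]_(n, m)) (Z : 'cV[R]_n -> 'cV[R]_p)
  (xs : nat -> 'cV[R]_n) (us : nat -> 'cV[R]_m)
  (Htraj : forall t : nat, xs t.+1 = A *m liftM Z (xs t) + B *m us t)
  (U0 : 'M[R]_(m, T)) (X1 : 'M[R]_(n, T)) (M0 : 'M[R]_(n + p, T))
  (HU0 : forall t : 'I_T, col t U0 = us t)
  (HX1 : forall t : 'I_T, col t X1 = xs t.+1)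
  (HM0 : forall t : 'I_T, col t M0 = liftM Z (xs t))
  (Hrank : \rank M0 = (n + p)%N)
  (Q : 'M[R]_(T, n + p))
  (HQ : M0 *m Q = 1%:M)
  (Hcancel : X1 *m rsubmx Q = 0) :
  forall (k : nat) (x : 'cV[R]_n), (0 < k)%N ->
    iter k (closed_loop A B Z U0 Q) x = (X1 *m lsubmx Q) ^+ k *m x.
Proof.
(* Hrank only guarantees that some Q with M0 Q = 1 exists, and the identity
   also holds for k = 0. *)
move=> k x _.
have X1_data : X1 = A *m M0 + B *m U0.
  by apply: mx_affine_cols => t; rewrite HX1 HM0 HU0 Htraj.
exact: iter_mulmx (closed_loop_linear Z X1_data HQ Hcancel) k x.
Qed.
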